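(* Let $\phi_1,\phi_2:\mathbb{R}\to\mathbb{R}$ be functions of extended class $\mathcal{K}_\infty$ satisfying $$\phi_1\circ\phi_2(r)>r\ \ \forall r<0,\qquad \phi_1\circ\phi_2(r)<r\ \ \forall r>0.$$ Then there exists a function $\phi$ of extended class $\mathcal{K}_\infty$ such that (1) $\phi_1^{-1}(r)<\phi(r)<\phi_2(r)$ for all $r<0$, and $\phi_2(r)<\phi(r)<\phi_1^{-1}(r)$ for all $r>0$; (2) $\phi$ is continuously differentiable on $\mathbb{R}\setminus\{0\}$ and $\phi'(r)>0$ for all $r\in\mathbb{R}\setminus\{0\}$.
   Context: A continuous function $\phi:\mathbb{R}\to\mathbb{R}$ with $\phi(0)=0$ is of extended class $\mathcal{K}_\infty$ if it is strictly increasing and unbounded above and below (hence a bijection of $\mathbb{R}$, with inverse $\phi^{-1}$ also of extended class $\mathcal{K}_\infty$). $\circ$ denotes composition. *)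

From Stdlib Require Import Reals.
From Coquelicot Require Import Coquelicot.
Open Scope R_scope.

Definition ext_K_inf (phi : R -> R) : Prop :=
  (forall x, continuous phi x) /\
  phi 0 = 0 /\
  (forall x y, x < y -> phi x < phi y) /\
  (forall M, exists x, M < phi x) /\
  (forall M, exists x, phi x < M).

From Stdlib Require Import Reals Lra ClassicalEpsilon.
From Coquelicot Require Import Coquelicot.
Open Scope R_scope.

(* The heart of the proof is a smoothing result on the whole line
   (smooth_between): if G < H are continuous and strictly increasing, let
   m = (G + H) / 2.  The "room" function D (Section Room) is positive,
   1/2-Lipschitz, and m (x + d) < H x whenever 0 <= d < D x.  The "clock"
   T x = int_0^x 2 / D (Section Clock) is a C^1 increasing bijection of R that
   advances by more than 1 on every window [x, x + D x].  Averaging the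
   increasing function M = m o T^-1 over unit windows in clock time,
   F x = int_(T x)^(T x + 1) M, gives m x < F x < m z < H x with
   z = T^-1 (T x + 1) in (x, x + D x), and F' = T' * (M (T x + 1) - M (T x)) > 0.
   Conjugating by exp and ln moves this to the half-line (0, +oo)
   (smooth_between_pos).  For the theorem we apply it to phi2 < phi1^-1 on
   (0, +oo) and to their reflections s |-> - psi (- s), glue the two halves
   by point reflection (odd_glue), and check the K_infinity axioms with
   sandwiched_ext_K_inf: phi is squeezed between phi2 and phi1^-1. *)

Lemma continuous_eps_delta (f : R -> R) x :
  continuous f x <->
  forall eps, 0 < eps -> exists d, 0 < d /\
    forall y, Rabs (y - x) < d -> Rabs (f y - f x) < eps.
Proof.
  rewrite <- (continuity_pt_filterlim f x). split.
  - intros Hf eps Heps. destruct (Hf eps Heps) as [d [Hd Hclose]].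
    exists d. split; [exact Hd|]. intros y Hy.
    destruct (Req_dec y x) as [->|Hne].
    + rewrite Rminus_diag, Rabs_R0. exact Heps.
    + apply Hclose. repeat split; auto.
  - intros Hf eps Heps. destruct (Hf eps Heps) as [d [Hd Hclose]].
    exists d. split; [exact Hd|]. intros y [_ Hy]. exact (Hclose y Hy).
Qed.

Lemma strict_increasing_le (f : R -> R) :
  strict_increasing f -> forall x y, x <= y -> f x <= f y.
Proof. intros Hf x y [Hxy| ->]; [left; apply Hf|right]; auto. Qed.

Lemma strict_increasing_reflect (f : R -> R) :
  strict_increasing f -> forall x y, f x < f y -> x < y.
Proof.
  intros Hf x y Hfxy. destruct (Rlt_or_le x y) as [Hxy|Hyx]; [exact Hxy|].
  apply (strict_increasing_le f Hf) in Hyx. lra.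
Qed.

Lemma continuous_right_inverse (f g : R -> R) :
  strict_increasing f -> (forall t, f (g t) = t) -> forall t, continuous g t.
Proof.
  intros Hf Hfg t. apply continuous_eps_delta. intros eps Heps.
  assert (Hlo : f (g t - eps) < t) by (rewrite <- (Hfg t) at 2; apply Hf; lra).
  assert (Hhi : t < f (g t + eps)) by (rewrite <- (Hfg t) at 1; apply Hf; lra).
  exists (Rmin (t - f (g t - eps)) (f (g t + eps) - t)). split.
  - apply Rmin_glb_lt; lra.
  - intros y Hy. apply Rabs_def2 in Hy as [Hy1 Hy2].
    assert (H1 := Rmin_l (t - f (g t - eps)) (f (g t + eps) - t)).
    assert (H2 := Rmin_r (t - f (g t - eps)) (f (g t + eps) - t)).
    assert (g t - eps < g y) by (apply (strict_increasing_reflect f Hf); rewrite Hfg; lra).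
    assert (g y < g t + eps) by (apply (strict_increasing_reflect f Hf); rewrite Hfg; lra).
    apply Rabs_def1; lra.
Qed.

Lemma half_lipschitz_continuous (D : R -> R) :
  (forall x y, D x <= D y + Rabs (x - y) / 2) -> forall x, continuous D x.
Proof.
  intros HD x. apply continuous_eps_delta. intros eps Heps.
  exists eps. split; [exact Heps|]. intros y Hy.
  assert (A := HD y x). assert (B := HD x y).
  rewrite Rabs_minus_sym in B. apply Rabs_def1; lra.
Qed.

Lemma RInt_ge_const (f : R -> R) a b c : a <= b -> ex_RInt f a b ->
  (forall x, a < x < b -> c <= f x) -> c * (b - a) <= RInt f a b.
Proof.
  intros Hab Hf Hc.
  assert (Hle : RInt (fun _ => c) a b <= RInt f a b)
    by (apply RInt_le; auto; apply ex_RInt_const).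
  rewrite RInt_const in Hle. unfold scal in Hle; simpl in Hle.
  unfold mult in Hle; simpl in Hle. lra.
Qed.

Lemma ex_RInt_cont (f : R -> R) a b : (forall x, continuous f x) -> ex_RInt f a b.
Proof. intros Hf. apply (@ex_RInt_continuous R_CompleteNormedModule); auto. Qed.

(* Given continuous m < H, room x measures how far to the right of x one may
   move and keep m below H x.  It is the infimum of 1 and of the numbers
   d + |x - y| / 2 over the "obstructions" H y <= m (y + d); this form makes it
   1/2-Lipschitz for free. *)
Section Room.

Variables m H : R -> R.
Hypothesis m_cont : forall x, continuous m x.
Hypothesis H_cont : forall x, continuous H x.
Hypothesis m_lt_H : forall x, m x < H x.

Definition room_bounds (x v : R) : Prop :=
  v = 1 \/ exists y d, 0 <= d /\ H y <= m (y + d) /\ v = d + Rabs (x - y) / 2.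

Definition room (x : R) : R := real (Glb_Rbar (room_bounds x)).

Lemma room_bounds_nonneg x v : room_bounds x v -> 0 <= v.
Proof.
  intros [->|[y [d [Hd [_ ->]]]]]; [lra|].
  assert (0 <= Rabs (x - y)) by apply Rabs_pos. lra.
Qed.

Lemma room_glb x : Glb_Rbar (room_bounds x) = Finite (room x).
Proof.
  unfold room. destruct (Glb_Rbar_correct (room_bounds x)) as [Hlb Hglb].
  assert (Hle1 : Rbar_le (Glb_Rbar (room_bounds x)) 1) by (apply Hlb; left; auto).
  assert (Hge0 : Rbar_le 0 (Glb_Rbar (room_bounds x))).
  { apply Hglb. intros v Hv. exact (room_bounds_nonneg x v Hv). }
  destruct (Glb_Rbar (room_bounds x)); simpl in *; easy.
Qed.

Lemma room_le x v : room_bounds x v -> room x <= v.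
Proof.
  intros Hv. destruct (Glb_Rbar_correct (room_bounds x)) as [Hlb _].
  specialize (Hlb v Hv). rewrite room_glb in Hlb. exact Hlb.
Qed.

Lemma room_ge x c : (forall v, room_bounds x v -> c <= v) -> c <= room x.
Proof.
  intros Hc. destruct (Glb_Rbar_correct (room_bounds x)) as [_ Hglb].
  assert (Hle : Rbar_le c (Glb_Rbar (room_bounds x))) by (apply Hglb; exact Hc).
  rewrite room_glb in Hle. exact Hle.
Qed.

(* room is 1/2-Lipschitz: an obstruction seen from x2 is seen from x1 at
   extra cost |x1 - x2| / 2. *)
Lemma room_lipschitz x1 x2 : room x1 <= room x2 + Rabs (x1 - x2) / 2.
Proof.
  cut (room x1 - Rabs (x1 - x2) / 2 <= room x2); [lra|].
  apply room_ge. intros v [->|[y [d [Hd [Hyd ->]]]]].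
  - assert (room x1 <= 1) by (apply room_le; left; auto).
    assert (0 <= Rabs (x1 - x2)) by apply Rabs_pos. lra.
  - assert (room x1 <= d + Rabs (x1 - y) / 2)
      by (apply room_le; right; exists y, d; auto).
    assert (Rabs (x1 - y) <= Rabs (x1 - x2) + Rabs (x2 - y)).
    { replace (x1 - y) with ((x1 - x2) + (x2 - y)) by ring. apply Rabs_triang. }
    lra.
Qed.

Lemma room_spec x d : 0 <= d < room x -> m (x + d) < H x.
Proof.
  intros [Hd Hdroom]. destruct (Rlt_or_le (m (x + d)) (H x)) as [Hlt|Hge]; [exact Hlt|].
  assert (room x <= d).
  { apply room_le. right. exists x, d. rewrite Rminus_diag, Rabs_R0.
    repeat split; auto; lra. }
  lra.
Qed.

(* By continuity there are no obstructions close to x, so room x > 0. *)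
Lemma room_pos x : 0 < room x.
Proof.
  set (e := (H x - m x) / 2).
  assert (He : 0 < e) by (unfold e; specialize (m_lt_H x); lra).
  destruct (proj1 (continuous_eps_delta m x) (m_cont x) e He) as [d1 [Hd1 Hm]].
  destruct (proj1 (continuous_eps_delta H x) (H_cont x) e He) as [d2 [Hd2 HH]].
  set (eta := Rmin d1 d2).
  assert (Heta : 0 < eta) by (apply Rmin_glb_lt; auto).
  assert (E1 := Rmin_l d1 d2). assert (E2 := Rmin_r d1 d2). fold eta in E1, E2.
  apply Rlt_le_trans with (Rmin 1 (eta / 4)); [apply Rmin_glb_lt; lra|].
  apply room_ge. intros v [->|[y [d [Hd [Hyd ->]]]]]; [apply Rmin_l|].
  assert (Hmin := Rmin_r 1 (eta / 4)).
  assert (0 <= Rabs (x - y)) by apply Rabs_pos.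
  destruct (Rle_or_lt (eta / 2) (Rabs (x - y))) as [Hy|Hy]; [lra|].
  destruct (Rle_or_lt (eta / 2) d) as [Hdl|Hdl]; [lra|].
  exfalso.
  assert (Hy2 : Rabs (y - x) < d2) by (rewrite Rabs_minus_sym; lra).
  assert (Hy1 : Rabs (y + d - x) < d1).
  { apply Rle_lt_trans with (Rabs (y - x) + Rabs d).
    - replace (y + d - x) with ((y - x) + d) by ring. apply Rabs_triang.
    - rewrite (Rabs_right d), Rabs_minus_sym by lra. lra. }
  specialize (Hm _ Hy1). specialize (HH _ Hy2).
  apply Rabs_def2 in Hm. apply Rabs_def2 in HH. unfold e in *. lra.
Qed.

End Room.
Lemma increasing_surjection_inverse (f : R -> R) :
  strict_increasing f -> (forall t, exists x, f x = t) ->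
  exists g : R -> R, (forall t, f (g t) = t) /\ (forall x, g (f x) = x) /\
    strict_increasing g /\ (forall t, continuous g t).
Proof.
  intros Hf Hsurj.
  exists (fun t => proj1_sig (constructive_indefinite_description _ (Hsurj t))).
  set (g := fun t => proj1_sig _).
  assert (Hfg : forall t, f (g t) = t).
  { intros t. unfold g. destruct (constructive_indefinite_description _ _); auto. }
  split; [exact Hfg|split; [|split]].
  - intros x. assert (Hx := Hfg (f x)).
    destruct (Rtotal_order (g (f x)) x) as [Hlt|[Heq|Hlt]]; auto;
      apply Hf in Hlt; lra.
  - intros s t Hst. apply (strict_increasing_reflect f Hf). rewrite !Hfg. exact Hst.
  - exact (continuous_right_inverse f g Hf Hfg).
Qed.

Section Clock.

Variable D : R -> R.
Hypothesis D_pos : forall x, 0 < D x.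
Hypothesis D_lip : forall x y, D x <= D y + Rabs (x - y) / 2.

Definition rate (x : R) : R := 2 / D x.

Definition clock (x : R) : R := RInt rate 0 x.

Lemma rate_pos x : 0 < rate x.
Proof. unfold rate. specialize (D_pos x). apply Rdiv_lt_0_compat; lra. Qed.

Lemma rate_cont x : continuous rate x.
Proof.
  apply (continuous_ext (fun y => 2 * / D y)); [reflexivity|].
  apply (@continuous_mult R_UniformSpace R_AbsRing); [apply continuous_const|].
  apply continuous_Rinv_comp.
  - exact (half_lipschitz_continuous D D_lip x).
  - specialize (D_pos x). lra.
Qed.

(* On the window |u - x| <= D x we have D u <= 3/2 D x, bounding the rate. *)
Lemma rate_near x u : Rabs (u - x) <= D x -> 4 / (3 * D x) <= rate u.
Proof.
  intros Hu. assert (HDx := D_pos x). assert (HDu := D_pos u).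
  assert (D u <= 3 / 2 * D x) by (specialize (D_lip u x); lra).
  unfold rate. replace (4 / (3 * D x)) with (2 / (3 / 2 * D x)) by (field; lra).
  unfold Rdiv. apply Rmult_le_compat_l; [lra|]. apply Rinv_le_contravar; lra.
Qed.

Lemma clock_derive x : is_derive clock x (rate x).
Proof.
  apply is_derive_RInt with 0; [|apply rate_cont].
  apply filter_forall. intros b. unfold clock.
  apply (RInt_correct (V := R_CompleteNormedModule)), ex_RInt_cont, rate_cont.
Qed.

Lemma clock_increasing : strict_increasing clock.
Proof.
  intros x y Hxy. apply (incr_function clock m_infty p_infty rate); simpl; auto.
  - intros; apply clock_derive.
  - intros; apply rate_pos.
Qed.

Lemma clock_diff a b : clock b - clock a = RInt rate a b.
Proof.
  unfold clock. rewrite <- (RInt_Chasles rate 0 a b) by apply ex_RInt_cont, rate_cont.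
  unfold plus; simpl. ring.
Qed.

Lemma clock_step_right x : clock x + 1 < clock (x + D x).
Proof.
  assert (HDx := D_pos x).
  assert (4 / (3 * D x) * (x + D x - x) <= clock (x + D x) - clock x).
  { rewrite clock_diff. apply RInt_ge_const; [lra|apply ex_RInt_cont, rate_cont|].
    intros u Hu. apply rate_near. rewrite Rabs_right; lra. }
  replace (4 / (3 * D x) * (x + D x - x)) with (4 / 3) in H by (field; lra). lra.
Qed.

Lemma clock_step_left x : clock (x - D x) + 1 < clock x.
Proof.
  assert (HDx := D_pos x).
  assert (4 / (3 * D x) * (x - (x - D x)) <= clock x - clock (x - D x)).
  { rewrite clock_diff. apply RInt_ge_const; [lra|apply ex_RInt_cont, rate_cont|].
    intros u Hu. apply rate_near. rewrite Rabs_left1; lra. }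
  replace (4 / (3 * D x) * (x - (x - D x))) with (4 / 3) in H by (field; lra). lra.
Qed.

Lemma clock_unbounded (n : nat) : exists a b, clock a <= - INR n /\ INR n <= clock b.
Proof.
  induction n as [|n [a [b [Ha Hb]]]].
  - exists 0, 0. unfold clock. rewrite RInt_point. unfold zero; simpl. lra.
  - exists (a - D a), (b + D b). rewrite S_INR.
    assert (Hl := clock_step_left a). assert (Hr := clock_step_right b). lra.
Qed.

Lemma clock_surjective t : exists x, clock x = t.
Proof.
  destruct (INR_unbounded (Rabs t)) as [n Hn].
  destruct (clock_unbounded n) as [a [b [Ha Hb]]].
  assert (Ht := proj1 (Rabs_le_between t (Rabs t)) (Rle_refl _)).
  destruct (IVT_gen clock a b t) as [x [_ Hx]]; [| |exists x; exact Hx].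
  - intros x. apply continuity_pt_filterlim.
    exact (ex_derive_continuous clock x (ex_intro _ _ (clock_derive x))).
  - split.
    + apply Rle_trans with (clock a); [apply Rmin_l|lra].
    + apply Rle_trans with (clock b); [lra|apply Rmax_r].
Qed.

End Clock.

Definition C1_pos_on (U : R -> Prop) (f df : R -> R) : Prop :=
  forall x, U x -> is_derive f x (df x) /\ continuous df x /\ 0 < df x.

Definition window_avg (M : R -> R) (t : R) : R := RInt M t (t + 1).

Lemma window_avg_bounds (M : R -> R) t :
  strict_increasing M -> (forall x, continuous M x) ->
  M t < window_avg M t < M (t + 1).
Proof.
  intros HM Hc.
  assert (Hconst : forall c : R, RInt (fun _ => c) t (t + 1) = c).
  { intros c. rewrite RInt_const. unfold scal; simpl; unfold mult; simpl. ring. }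
  unfold window_avg. rewrite <- (Hconst (M t)) at 1. rewrite <- (Hconst (M (t + 1))).
  split; apply RInt_lt; try lra; try (intros; apply continuous_const); auto;
    intros x Hx; apply HM; lra.
Qed.

Lemma window_avg_derive (M : R -> R) t : (forall x, continuous M x) ->
  is_derive (window_avg M) t (M (t + 1) - M t).
Proof.
  intros Hc.
  set (prim := fun y => RInt M 0 y).
  assert (Hprim : forall y, is_derive prim y (M y)).
  { intros y. apply is_derive_RInt with 0; [|apply Hc].
    apply filter_forall. intros b. apply (RInt_correct (V := R_CompleteNormedModule)).
    apply ex_RInt_cont, Hc. }
  apply is_derive_ext with (fun s => prim (s + 1) - prim s).
  { intros s. unfold prim, window_avg.
    rewrite <- (RInt_Chasles M 0 s (s + 1)) by apply ex_RInt_cont, Hc.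
    unfold plus; simpl. ring. }
  apply (@is_derive_minus R_AbsRing R_NormedModule); [|apply Hprim].
  replace (M (t + 1)) with (scal 1 (M (t + 1)))
    by (unfold scal; simpl; unfold mult; simpl; ring).
  apply (is_derive_comp prim (fun s => s + 1)); [apply Hprim|].
  auto_derive; auto; ring.
Qed.

Lemma smooth_between (G H : R -> R) :
  (forall x, continuous G x) -> (forall x, continuous H x) ->
  strict_increasing G -> strict_increasing H -> (forall x, G x < H x) ->
  exists F dF, (forall x, G x < F x < H x) /\ C1_pos_on (fun _ => True) F dF.
Proof.
  intros G_cont H_cont G_incr H_incr G_lt_H.
  set (m := fun x => (G x + H x) / 2).
  assert (m_cont : forall x, continuous m x).
  { intros x. apply (continuous_ext (fun y => (G y + H y) * / 2)); [reflexivity|].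
    apply (@continuous_mult R_UniformSpace R_AbsRing); [|apply continuous_const].
    apply (@continuous_plus R_UniformSpace R_AbsRing R_NormedModule); auto. }
  assert (m_incr : strict_increasing m).
  { intros x y Hxy. unfold m. specialize (G_incr x y Hxy). specialize (H_incr x y Hxy). lra. }
  assert (G_lt_m : forall x, G x < m x) by (intros x; unfold m; specialize (G_lt_H x); lra).
  assert (m_lt_H : forall x, m x < H x) by (intros x; unfold m; specialize (G_lt_H x); lra).
  set (D := room m H).
  assert (D_pos : forall x, 0 < D x) by (intros x; apply room_pos; auto).
  assert (D_lip : forall x y, D x <= D y + Rabs (x - y) / 2) by apply room_lipschitz.
  set (T := clock D).
  assert (T_incr : strict_increasing T) by (apply clock_increasing; auto).
  assert (T_derive : forall x, is_derive T x (rate D x)) by (intros; apply clock_derive; auto).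
  destruct (increasing_surjection_inverse T T_incr) as [Ti [TTi [TiT [Ti_incr Ti_cont]]]].
  { intros t. apply clock_surjective; auto. }
  set (M := fun s => m (Ti s)).
  assert (M_cont : forall s, continuous M s)
    by (intros s; apply (continuous_comp Ti m); auto).
  assert (M_incr : strict_increasing M) by (intros s t Hst; apply m_incr, Ti_incr, Hst).
  exists (fun x => window_avg M (T x)), (fun x => rate D x * (M (T x + 1) - M (T x))).
  split.
  - intros x. destruct (window_avg_bounds M (T x) M_incr M_cont) as [Hlo Hhi].
    change (M (T x)) with (m (Ti (T x))) in Hlo. rewrite TiT in Hlo.
    split; [specialize (G_lt_m x); lra|].
    set (z := Ti (T x + 1)) in *.
    assert (Tz : T z = T x + 1) by apply TTi.
    assert (x_lt_z : x < z) by (apply (strict_increasing_reflect T T_incr); lra).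
    assert (z_near_x : z < x + D x).
    { apply (strict_increasing_reflect T T_incr).
      assert (Hstep : T x + 1 < T (x + D x)) by (apply clock_step_right; auto). lra. }
    assert (m z < H x).
    { replace z with (x + (z - x)) by ring. apply room_spec. fold D. lra. }
    change (M (T x + 1)) with (m z) in Hhi. lra.
  - intros x _. split; [|split].
    + replace (rate D x * (M (T x + 1) - M (T x)))
        with (scal (rate D x) (M (T x + 1) - M (T x))) by reflexivity.
      apply (is_derive_comp (window_avg M) T); [|apply T_derive].
      apply window_avg_derive, M_cont.
    + apply (@continuous_mult R_UniformSpace R_AbsRing); [apply rate_cont; auto|].
      apply (@continuous_minus R_UniformSpace R_AbsRing R_NormedModule).
      * apply (continuous_comp (fun y => T y + 1) M); [|apply M_cont].
        apply (@continuous_plus R_UniformSpace R_AbsRing R_NormedModule);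
          [|apply continuous_const].
        exact (ex_derive_continuous T x (ex_intro _ _ (T_derive x))).
      * apply (continuous_comp T M); [|apply M_cont].
        exact (ex_derive_continuous T x (ex_intro _ _ (T_derive x))).
    + apply Rmult_lt_0_compat; [apply rate_pos; auto|].
      assert (M (T x) < M (T x + 1)) by (apply M_incr; lra). lra.
Qed.

(* The same on the half-line (0, +oo), by conjugating with exp and ln. *)
Lemma smooth_between_pos (g h : R -> R) :
  (forall x, 0 < x -> continuous g x) -> (forall x, 0 < x -> continuous h x) ->
  (forall x y, 0 < x -> x < y -> g x < g y) ->
  (forall x y, 0 < x -> x < y -> h x < h y) ->
  (forall x, 0 < x -> 0 < g x < h x) ->
  exists f df, (forall r, 0 < r -> g r < f r < h r) /\ C1_pos_on (fun r => 0 < r) f df.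
Proof.
  intros g_cont h_cont g_incr h_incr g_lt_h.
  assert (g_pos : forall x, 0 < g (exp x)) by (intros x; apply g_lt_h, exp_pos).
  assert (h_pos : forall x, 0 < h (exp x))
    by (intros x; destruct (g_lt_h (exp x) (exp_pos x)); lra).
  set (G := fun x => ln (g (exp x))). set (H := fun x => ln (h (exp x))).
  destruct (smooth_between G H) as [F [dF [F_between F_C1]]].
  - intros x. apply (continuous_comp (fun y => g (exp y)) ln); [|apply continuous_ln; auto].
    apply (continuous_comp exp g); [apply continuous_exp|apply g_cont, exp_pos].
  - intros x. apply (continuous_comp (fun y => h (exp y)) ln); [|apply continuous_ln; auto].
    apply (continuous_comp exp h); [apply continuous_exp|apply h_cont, exp_pos].
  - intros x y Hxy. apply ln_increasing; auto. apply g_incr; [apply exp_pos|].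
    apply exp_increasing, Hxy.
  - intros x y Hxy. apply ln_increasing; auto. apply h_incr; [apply exp_pos|].
    apply exp_increasing, Hxy.
  - intros x. apply ln_increasing; auto. apply g_lt_h, exp_pos.
  - exists (fun r => exp (F (ln r))), (fun r => / r * dF (ln r) * exp (F (ln r))).
    split.
    + intros r Hr. destruct (F_between (ln r)) as [Hlo Hhi].
      unfold G, H in Hlo, Hhi. rewrite exp_ln in Hlo, Hhi by exact Hr.
      destruct (g_lt_h r Hr) as [Hg Hgh].
      split.
      * rewrite <- (exp_ln (g r)) by exact Hg. apply exp_increasing, Hlo.
      * rewrite <- (exp_ln (h r)) by lra. apply exp_increasing, Hhi.
    + intros r Hr. destruct (F_C1 (ln r) I) as [F_der [dF_cont dF_pos]].
      assert (F_ln_cont : continuous (fun s => F (ln s)) r).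
      { apply (continuous_comp ln F); [apply continuous_ln, Hr|].
        exact (ex_derive_continuous F _ (ex_intro _ _ F_der)). }
      split; [|split].
      * change (/ r * dF (ln r) * exp (F (ln r)))
          with (scal (scal (/ r) (dF (ln r))) (exp (F (ln r)))).
        apply (is_derive_comp exp (fun s => F (ln s))); [apply is_derive_exp|].
        apply (is_derive_comp F ln); [exact F_der|apply is_derive_ln, Hr].
      * apply (@continuous_mult R_UniformSpace R_AbsRing);
          [apply (@continuous_mult R_UniformSpace R_AbsRing)|].
        -- apply continuous_Rinv. lra.
        -- apply (continuous_comp ln dF); [apply continuous_ln, Hr|exact dF_cont].
        -- apply (continuous_comp (fun s => F (ln s)) exp);
             [exact F_ln_cont|apply continuous_exp].
      * apply Rmult_lt_0_compat; [apply Rmult_lt_0_compat|apply exp_pos];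
          [apply Rinv_0_lt_compat, Hr|exact dF_pos].
Qed.

Lemma C1_pos_increasing (f df : R -> R) :
  C1_pos_on (fun r => 0 < r) f df -> forall x y, 0 < x -> x < y -> f x < f y.
Proof.
  intros Hf x y Hx Hxy.
  apply (incr_function f (Finite 0) p_infty df); simpl; auto; try lra;
    intros z Hz _; apply Hf, Hz.
Qed.

Lemma locally_pos r : 0 < r -> locally r (fun y => 0 < y).
Proof.
  intros Hr. exists (mkposreal r Hr). intros y Hy.
  change (Rabs (y - r) < r) in Hy. apply Rabs_def2 in Hy. lra.
Qed.

Lemma locally_neg r : r < 0 -> locally r (fun y => y < 0).
Proof.
  intros Hr. assert (Hr' : 0 < - r) by lra. exists (mkposreal (- r) Hr'). intros y Hy.
  change (Rabs (y - r) < - r) in Hy. apply Rabs_def2 in Hy. lra.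
Qed.

Lemma Derive_of_C1 (f df : R -> R) x :
  locally x (fun y => is_derive f y (df y)) -> continuous df x -> 0 < df x ->
  ex_derive f x /\ continuous (Derive f) x /\ Derive f x > 0.
Proof.
  intros Hder Hcont Hpos.
  assert (Hx : is_derive f x (df x)) by exact (locally_singleton _ _ Hder).
  split; [|split].
  - exists (df x). exact Hx.
  - apply continuous_ext_loc with df; [|exact Hcont].
    apply filter_imp with (2 := Hder). intros y Hy. symmetry. apply is_derive_unique, Hy.
  - rewrite (is_derive_unique _ _ _ Hx). exact Hpos.
Qed.

Definition odd_glue (f g : R -> R) (r : R) : R :=
  if Rlt_dec 0 r then f r else if Rlt_dec r 0 then - g (- r) else 0.

Lemma odd_glue_pos f g r : 0 < r -> odd_glue f g r = f r.
Proof. intros Hr. unfold odd_glue. destruct (Rlt_dec 0 r); [reflexivity|lra]. Qed.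

Lemma odd_glue_neg f g r : r < 0 -> odd_glue f g r = - g (- r).
Proof.
  intros Hr. unfold odd_glue.
  destruct (Rlt_dec 0 r); [lra|]. destruct (Rlt_dec r 0); [reflexivity|lra].
Qed.

Lemma odd_glue_zero f g : odd_glue f g 0 = 0.
Proof.
  unfold odd_glue. destruct (Rlt_dec 0 0); [lra|]. destruct (Rlt_dec 0 0); [lra|reflexivity].
Qed.

Section OddGlue.

Variables f g df dg : R -> R.
Hypothesis f_C1 : C1_pos_on (fun r => 0 < r) f df.
Hypothesis g_C1 : C1_pos_on (fun r => 0 < r) g dg.

Lemma odd_glue_increasing :
  (forall r, 0 < r -> 0 < f r) -> (forall r, 0 < r -> 0 < g r) ->
  strict_increasing (odd_glue f g).
Proof.
  intros f_pos g_pos.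
  intros x y Hxy.
  destruct (Rlt_or_le 0 x) as [Hx|Hx].
  { rewrite !odd_glue_pos by lra. exact (C1_pos_increasing f df f_C1 x y Hx Hxy). }
  destruct (Rlt_or_le y 0) as [Hy|Hy].
  { rewrite !odd_glue_neg by lra.
    assert (g (- y) < g (- x)) by (apply (C1_pos_increasing g dg g_C1); lra). lra. }
  destruct Hx as [Hx| ->].
  - rewrite (odd_glue_neg f g x Hx). specialize (g_pos (- x)).
    destruct Hy as [Hy| <-].
    + rewrite (odd_glue_pos f g y Hy). specialize (f_pos y Hy). lra.
    + rewrite odd_glue_zero. lra.
  - rewrite odd_glue_zero, (odd_glue_pos f g y Hxy). exact (f_pos y Hxy).
Qed.

Lemma odd_glue_C1 r : r <> 0 ->
  ex_derive (odd_glue f g) r /\ continuous (Derive (odd_glue f g)) r /\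
  Derive (odd_glue f g) r > 0.
Proof.
  intros Hr. destruct (Rtotal_order r 0) as [Hneg|[Hzero|Hpos]]; [| contradiction |].
  - apply (Derive_of_C1 _ (fun y => dg (- y))).
    + apply filter_imp with (2 := locally_neg r Hneg). intros y Hy.
      apply is_derive_ext_loc with (fun t => - g (- t)).
      { apply filter_imp with (2 := locally_neg y Hy). intros t Ht.
        symmetry. apply odd_glue_neg, Ht. }
      replace (dg (- y)) with (opp (scal (-1) (dg (- y))))
        by (unfold opp, scal; simpl; unfold mult; simpl; ring).
      apply (@is_derive_opp R_AbsRing R_NormedModule (fun t => g (- t))).
      apply (is_derive_comp g (fun t => - t)); [apply g_C1; lra|].
      auto_derive; auto; ring.
    + apply (continuous_comp (fun y => - y) dg); [|apply g_C1; lra].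
      apply (@continuous_opp R_UniformSpace R_AbsRing R_NormedModule), continuous_id.
    + apply g_C1. lra.
  - apply (Derive_of_C1 _ df).
    + apply filter_imp with (2 := locally_pos r Hpos). intros y Hy.
      apply is_derive_ext_loc with f; [|apply f_C1, Hy].
      apply filter_imp with (2 := locally_pos y Hy). intros t Ht.
      symmetry. apply odd_glue_pos, Ht.
    + apply f_C1, Hpos.
    + apply f_C1, Hpos.
Qed.

End OddGlue.

Lemma ext_K_inf_pos phi r : ext_K_inf phi -> 0 < r -> 0 < phi r.
Proof. intros [_ [phi0 [incr _]]] Hr. rewrite <- phi0. apply incr, Hr. Qed.

Lemma ext_K_inf_neg phi r : ext_K_inf phi -> r < 0 -> phi r < 0.
Proof. intros [_ [phi0 [incr _]]] Hr. rewrite <- phi0. apply incr, Hr. Qed.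

Lemma ext_K_inf_inverse (phi psi : R -> R) :
  ext_K_inf phi -> (forall r, phi (psi r) = r) -> (forall r, psi (phi r) = r) ->
  ext_K_inf psi.
Proof.
  intros [_ [phi0 [incr _]]] phi_psi psi_phi.
  split; [|split; [|split; [|split]]].
  - exact (continuous_right_inverse phi psi incr phi_psi).
  - rewrite <- phi0 at 1. apply psi_phi.
  - intros x y Hxy. apply (strict_increasing_reflect phi incr). rewrite !phi_psi. exact Hxy.
  - intros M. exists (phi (M + 1)). rewrite psi_phi. lra.
  - intros M. exists (phi (M - 1)). rewrite psi_phi. lra.
Qed.

Lemma ext_K_inf_reflect phi : ext_K_inf phi -> ext_K_inf (fun s => - phi (- s)).
Proof.
  intros [cont [phi0 [incr [above below]]]].
  split; [|split; [|split; [|split]]].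
  - intros x. apply (@continuous_opp R_UniformSpace R_AbsRing R_NormedModule).
    apply (continuous_comp (fun s => - s) phi); [|apply cont].
    apply (@continuous_opp R_UniformSpace R_AbsRing R_NormedModule), continuous_id.
  - rewrite Ropp_0, phi0. lra.
  - intros x y Hxy. assert (phi (- y) < phi (- x)) by (apply incr; lra). lra.
  - intros M. destruct (below (- M)) as [x Hx]. exists (- x). rewrite Ropp_involutive. lra.
  - intros M. destruct (above (- M)) as [x Hx]. exists (- x). rewrite Ropp_involutive. lra.
Qed.

Lemma smooth_between_K_inf (a b : R -> R) :
  ext_K_inf a -> ext_K_inf b -> (forall r, 0 < r -> a r < b r) ->
  exists f df, (forall r, 0 < r -> a r < f r < b r) /\ C1_pos_on (fun r => 0 < r) f df.
Proof.
  intros Ka Kb a_lt_b. pose proof Ka as [a_cont [_ [a_incr _]]].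
  pose proof Kb as [b_cont [_ [b_incr _]]].
  apply smooth_between_pos; auto.
  intros x Hx. split; [apply (ext_K_inf_pos a x Ka Hx)|apply a_lt_b, Hx].
Qed.

(* A strictly increasing function with phi 0 = 0, continuous off 0, that lies
   between a and b on each side (a the inner one) is extended K_infinity when
   a and b are: |phi| <= |b| gives continuity at 0, phi beyond a gives
   unboundedness. *)
Lemma sandwiched_ext_K_inf (phi a b : R -> R) :
  ext_K_inf a -> ext_K_inf b ->
  (forall r, 0 < r -> a r < phi r < b r) -> (forall r, r < 0 -> b r < phi r < a r) ->
  phi 0 = 0 -> strict_increasing phi -> (forall r, r <> 0 -> continuous phi r) ->
  ext_K_inf phi.
Proof.
  intros Ka Kb between_pos between_neg phi0 incr cont.
  pose proof Ka as [_ [_ [a_incr [a_above a_below]]]].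
  pose proof Kb as [b_cont [b0 _]].
  assert (dominated : forall r, Rabs (phi r) <= Rabs (b r)).
  { intros r. destruct (Rtotal_order r 0) as [Hr|[->|Hr]].
    - specialize (between_neg r Hr). assert (a r < 0) by exact (ext_K_inf_neg a r Ka Hr).
      rewrite !Rabs_left by lra. lra.
    - rewrite phi0, b0. lra.
    - specialize (between_pos r Hr). assert (0 < a r) by exact (ext_K_inf_pos a r Ka Hr).
      rewrite !Rabs_right by lra. lra. }
  split; [|split; [exact phi0|split; [exact incr|split]]].
  - intros x. destruct (Req_dec x 0) as [->|Hx]; [|exact (cont x Hx)].
    apply continuous_eps_delta. intros eps Heps.
    destruct (proj1 (continuous_eps_delta b 0) (b_cont 0) eps Heps) as [d [Hd Hb]].
    exists d. split; [exact Hd|]. intros y Hy. specialize (Hb y Hy).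
    rewrite phi0, Rminus_0_r. rewrite b0, Rminus_0_r in Hb.
    exact (Rle_lt_trans _ _ _ (dominated y) Hb).
  - intros M. destruct (a_above M) as [x Hx]. exists (Rmax x 1).
    assert (Hpos : 0 < Rmax x 1) by (apply Rlt_le_trans with 1; [lra|apply Rmax_r]).
    assert (a x <= a (Rmax x 1))
      by (apply strict_increasing_le; [exact a_incr|apply Rmax_l]).
    specialize (between_pos _ Hpos). lra.
  - intros M. destruct (a_below M) as [x Hx]. exists (Rmin x (-1)).
    assert (Hneg : Rmin x (-1) < 0) by (apply Rle_lt_trans with (-1); [apply Rmin_r|lra]).
    assert (a (Rmin x (-1)) <= a x)
      by (apply strict_increasing_le; [exact a_incr|apply Rmin_l]).
    specialize (between_neg _ Hneg). lra.
Qed.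

(* Since phi1 o phi2 moves every r <> 0 towards 0, phi2 lies strictly between
   0 and phi1^-1 on each half-line; phi is glued from smooth functions fitted
   between them on (0, +oo) and, after reflection, on (-oo, 0). *)
Theorem lemma4 (phi1 phi2 phi1inv : R -> R) :
  ext_K_inf phi1 -> ext_K_inf phi2 ->
  (forall r, phi1 (phi1inv r) = r) -> (forall r, phi1inv (phi1 r) = r) ->
  (forall r, r < 0 -> phi1 (phi2 r) > r) ->
  (forall r, r > 0 -> phi1 (phi2 r) < r) ->
  exists phi : R -> R,
    ext_K_inf phi /\
    (forall r, r < 0 -> phi1inv r < phi r /\ phi r < phi2 r) /\
    (forall r, r > 0 -> phi2 r < phi r /\ phi r < phi1inv r) /\
    (forall r, r <> 0 ->
       ex_derive phi r /\ continuous (Derive phi) r /\ Derive phi r > 0).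
Proof.
  intros K1 K2 inv_r inv_l comp_neg comp_pos.
  assert (Kinv := ext_K_inf_inverse phi1 phi1inv K1 inv_r inv_l).
  pose proof K1 as [_ [_ [incr1 _]]].
  assert (gap_pos : forall r, 0 < r -> phi2 r < phi1inv r).
  { intros r Hr. apply (strict_increasing_reflect phi1 incr1). rewrite inv_r. apply comp_pos, Hr. }
  assert (gap_neg : forall r, r < 0 -> phi1inv r < phi2 r).
  { intros r Hr. apply (strict_increasing_reflect phi1 incr1). rewrite inv_r. apply comp_neg, Hr. }
  destruct (smooth_between_K_inf phi2 phi1inv K2 Kinv gap_pos)
    as [fp [dfp [fp_between fp_C1]]].
  destruct (smooth_between_K_inf _ _ (ext_K_inf_reflect phi2 K2)
              (ext_K_inf_reflect phi1inv Kinv))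
    as [fn [dfn [fn_between fn_C1]]].
  { intros r Hr. specialize (gap_neg (- r)). lra. }
  set (phi := odd_glue fp fn).
  assert (phi_pos : forall r, 0 < r -> phi2 r < phi r < phi1inv r).
  { intros r Hr. unfold phi. rewrite odd_glue_pos by exact Hr. apply fp_between, Hr. }
  assert (phi_neg : forall r, r < 0 -> phi1inv r < phi r < phi2 r).
  { intros r Hr. unfold phi. rewrite odd_glue_neg by exact Hr.
    specialize (fn_between (- r)). rewrite Ropp_involutive in fn_between. lra. }
  assert (phi_C1 := odd_glue_C1 fp fn dfp dfn fp_C1 fn_C1).
  exists phi. split; [|split; [exact phi_neg|split; [exact phi_pos|exact phi_C1]]].
  apply (sandwiched_ext_K_inf phi phi2 phi1inv K2 Kinv phi_pos phi_neg).
  - apply odd_glue_zero.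
  - apply (odd_glue_increasing fp fn dfp dfn fp_C1 fn_C1).
    + intros r Hr. destruct (fp_between r Hr) as [Hlo _].
      assert (Hp := ext_K_inf_pos phi2 r K2 Hr). lra.
    + intros r Hr. destruct (fn_between r Hr) as [Hlo _].
      assert (Hp := ext_K_inf_neg phi2 (- r) K2 ltac:(lra)). lra.
  - intros r Hr. apply (ex_derive_continuous (V := R_NormedModule)), phi_C1, Hr.
Qed.
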